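(* Let $f:\mathbb{R}^N\to\mathbb{R}$ be continuous with $\operatorname{argmin} f\neq\emptyset$. Let $p>1$, $\mu>0$, and suppose $f$ is globally $p$-Łojasiewicz with constant $\mu$, i.e., with $\frac1p+\frac1q=1$, $$(\forall x\in\mathbb{R}^N)(\forall x^*\in\partial_L f(x))\quad f(x)-\inf f \le \frac{1}{q\,\mu^{q/p}}\|x^*\|^q.$$ Then for all $x\in\mathbb{R}^N$, $$\frac{1}{(p-1)^{p-1}}\frac{\mu}{p}\, d_{\operatorname{argmin} f}(x)^p \le f(x)-\inf f.$$
   Context: For a closed set $S\subset\mathbb{R}^N$, $d_S(x) := \inf_{y\in S}\|y-x\|$ (Euclidean norm). For $g:\mathbb{R}^N\to\mathbb{R}$, the Fréchet subdifferential $\partial_F g(x)$ is the set of $x^*$ with $\liminf_{y\to x} \frac{g(y)-g(x)-\langle x^*,y-x\rangle}{\|y-x\|}\ge 0$; the limiting subdifferential $\partial_L g(x)$ is the set of $x^*$ for which there exist $x_n\to x$ and $x_n^*\to x^*$ with $g(x_n)\to g(x)$ and $x_n^*\in\partial_F g(x_n)$. *)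

From HB Require Import structures.
From mathcomp Require Import all_boot all_order all_algebra.
From mathcomp Require Import all_classical all_reals all_analysis.
Set Implicit Arguments. Unset Strict Implicit. Unset Printing Implicit Defensive.
Import Order.TTheory GRing.Theory Num.Theory.
Local Open Scope classical_set_scope.
Local Open Scope ring_scope.

Section Defs.
Variables (R : realType) (N : nat).
Notation vec := 'rV[R]_N.

Definition dotv (x y : vec) : R := \sum_(i < N) x ord0 i * y ord0 i.
Definition enorm (x : vec) : R := Num.sqrt (dotv x x).

Definition dist_set (S : set vec) (x : vec) : R :=
  inf [set enorm (y - x) | y in S].

Definition argmin (f : vec -> R) : set vec := [set x | forall y, f x <= f y].
Definition inff (f : vec -> R) : R := inf [set f x | x in setT].

Definition econtinuous (f : vec -> R) : Prop :=
  forall x (e : R), 0 < e -> exists2 d : R, 0 < d &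
    forall y, enorm (y - x) < d -> `|f y - f x| < e.

(* Frechet subdifferential: liminf_{y->x} (g y - g x - <x*,y-x>)/||y-x|| >= 0,
   unfolded with epsilon-delta *)
Definition frechet_subdiff (g : vec -> R) (x : vec) : set vec :=
  [set xs | forall (e : R), 0 < e -> exists2 d : R, 0 < d &
     forall y, 0 < enorm (y - x) < d ->
       - e <= (g y - g x - dotv xs (y - x)) / enorm (y - x)].

Definition vcvg (u : nat -> vec) (l : vec) : Prop :=
  forall (e : R), 0 < e -> exists n0 : nat, forall n, (n0 <= n)%N -> enorm (u n - l) < e.
Definition rcvg (u : nat -> R) (l : R) : Prop :=
  forall (e : R), 0 < e -> exists n0 : nat, forall n, (n0 <= n)%N -> `|u n - l| < e.

Definition limiting_subdiff (g : vec -> R) (x : vec) : set vec :=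
  [set xs | exists (xn xsn : nat -> vec),
     [/\ vcvg xn x, vcvg xsn xs, rcvg (fun n => g (xn n)) (g x) &
         forall n, frechet_subdiff g (xn n) (xsn n)]].
End Defs.

(** Write [h := (f - min f)^(1/p)] and [C := 1 / (q mu^(q/p))].  If
    [h x < lam * d(x, argmin f)] with [C (p lam)^q < 1], a minimiser [z] of
    [h + lam ||. - x||] lies outside [argmin f] and satisfies
    [h >= h z - lam ||. - z||]; by convexity of [t |-> t^p] this becomes
    [f >= f z - L ||. - z||] with [L = p lam (h z)^(p-1)].  Minimising
    [f + L' sqrt(||. - z||^2 + eta^2)] for [L'] slightly above [L] and small
    [eta] yields a Frechet subgradient of norm at most [L'] at a point where
    [f] is almost [f z], so the Lojasiewicz inequality gives
    [f z - min f <= C L^q = C (p lam)^q (f z - min f)], a contradiction.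
    Hence [h x >= m d(x, argmin f)] where [C (p m)^q = 1], and [m^p] is
    exactly the constant of the theorem. *)

From HB Require Import structures.
From mathcomp Require Import all_boot all_order all_algebra.
From mathcomp Require Import all_classical all_reals all_analysis.
From mathcomp Require Import ring lra.
Import Order.TTheory GRing.Theory Num.Theory numFieldNormedType.Exports.
Local Open Scope classical_set_scope.
Local Open Scope ring_scope.
Set Implicit Arguments. Unset Strict Implicit.

Section Euclidean.
Variables (R : realType) (N : nat).
Notation vec := 'rV[R]_N.
Implicit Types (x y z : vec) (a : R) (S : set vec).

Lemma dotvC x y : dotv x y = dotv y x.
Proof. by apply: eq_bigr => i _; rewrite mulrC. Qed.

Lemma dotvDl x y z : dotv (x + y) z = dotv x z + dotv y z.
Proof. by rewrite /dotv -big_split; apply: eq_bigr => i _; rewrite mxE mulrDl. Qed.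

Lemma dotvZl a x y : dotv (a *: x) y = a * dotv x y.
Proof. by rewrite /dotv mulr_sumr; apply: eq_bigr => i _; rewrite mxE mulrA. Qed.

Lemma dotvNl x y : dotv (- x) y = - dotv x y.
Proof. by rewrite -scaleN1r dotvZl mulN1r. Qed.

Lemma dotvBl x y z : dotv (x - y) z = dotv x z - dotv y z.
Proof. by rewrite dotvDl dotvNl. Qed.

Lemma dotvDr x y z : dotv x (y + z) = dotv x y + dotv x z.
Proof. by rewrite dotvC dotvDl !(dotvC x). Qed.

Lemma dotvZr a x y : dotv x (a *: y) = a * dotv x y.
Proof. by rewrite dotvC dotvZl dotvC. Qed.

Lemma dotvBr x y z : dotv x (y - z) = dotv x y - dotv x z.
Proof. by rewrite dotvC dotvBl !(dotvC x). Qed.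

Lemma dotv0l y : dotv 0 y = 0.
Proof. by rewrite -(scale0r (0 : vec)) dotvZl mul0r. Qed.

Lemma dotv_ge0 x : 0 <= dotv x x.
Proof. by apply: sumr_ge0 => i _; rewrite -expr2 sqr_ge0. Qed.

Lemma dotv_eq0 x : dotv x x = 0 -> x = 0.
Proof.
move=> /eqP; rewrite psumr_eq0; last by move=> i _; rewrite -expr2 sqr_ge0.
move=> /allP x0; apply/rowP => i; rewrite mxE.
by have := x0 i (mem_index_enum i); rewrite /= mulf_eq0 orbb => /eqP.
Qed.

Lemma enorm_ge0 x : 0 <= enorm x.
Proof. exact: sqrtr_ge0. Qed.

Lemma sqr_enorm x : enorm x ^+ 2 = dotv x x.
Proof. by rewrite sqr_sqrtr // dotv_ge0. Qed.

Lemma enorm0 : enorm (0 : vec) = 0.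
Proof. by rewrite /enorm dotv0l sqrtr0. Qed.

Lemma cauchy_schwarz x y : dotv x y ^+ 2 <= dotv x x * dotv y y.
Proof.
have [x0|xn0] := eqVneq (dotv x x) 0.
  by rewrite x0 (dotv_eq0 x0) dotv0l expr0n /= mul0r.
have xpos : 0 < dotv x x by rewrite lt_neqAle eq_sym xn0 dotv_ge0.
set a := dotv x x; set b := dotv x y; set c := dotv y y.
have := dotv_ge0 (a *: y - b *: x).
rewrite !(dotvBl, dotvBr, dotvZl, dotvZr) -/a -/c (dotvC y x) -/b => h.
have : 0 <= a * (a * c - b ^+ 2) by rewrite expr2; lra.
by rewrite pmulr_rge0 // subr_ge0.
Qed.

Lemma ler_dotv x y : `|dotv x y| <= enorm x * enorm y.
Proof.
rewrite -(ler_pXn2r (_ : (0 < 2)%N)) ?nnegrE ?mulr_ge0 ?enorm_ge0 //.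
by rewrite real_normK ?num_real // exprMn !sqr_enorm cauchy_schwarz.
Qed.

Lemma sqr_enormD x y :
  enorm (x + y) ^+ 2 = enorm x ^+ 2 + 2 * dotv x y + enorm y ^+ 2.
Proof. by rewrite !sqr_enorm dotvDl !dotvDr (dotvC y x); ring. Qed.

Lemma ler_enormD x y : enorm (x + y) <= enorm x + enorm y.
Proof.
rewrite -(ler_pXn2r (_ : (0 < 2)%N)) ?nnegrE ?addr_ge0 ?enorm_ge0 //.
have := le_trans (ler_norm _) (ler_dotv x y).
rewrite sqr_enormD sqrrD mulr2n; lra.
Qed.

Lemma enormZ a x : enorm (a *: x) = `|a| * enorm x.
Proof.
by rewrite /enorm dotvZl dotvZr mulrA -expr2 sqrtrM ?sqr_ge0 // sqrtr_sqr.
Qed.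

Lemma enormN x : enorm (- x) = enorm x.
Proof. by rewrite -scaleN1r enormZ normrN normr1 mul1r. Qed.

Lemma enormBC x y : enorm (x - y) = enorm (y - x).
Proof. by rewrite -enormN opprB. Qed.

Lemma ler_enorm_split x y z : enorm (x - z) <= enorm (x - y) + enorm (y - z).
Proof. by have := ler_enormD (x - y) (y - z); rewrite addrA subrK. Qed.

Lemma ler_dist_enorm x y : `|enorm x - enorm y| <= enorm (x - y).
Proof.
rewrite ler_norml; apply/andP; split.
- by have := ler_enormD (y - x) x; rewrite subrK enormBC; lra.
- by have := ler_enormD (x - y) y; rewrite subrK; lra.
Qed.

Lemma ler_coord_enorm x i : `|x ord0 i| <= enorm x.
Proof.
rewrite -sqrtr_sqr ler_sqrt ?dotv_ge0 // /dotv (bigD1 i) //= -expr2 lerDl.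
by apply: sumr_ge0 => j _; rewrite -expr2 sqr_ge0.
Qed.

Lemma sqr_enorm_le_coord x M : (forall i, `|x ord0 i| <= M) ->
  enorm x ^+ 2 <= N%:R * M ^+ 2.
Proof.
move=> xM; rewrite sqr_enorm /dotv.
have -> : N%:R * M ^+ 2 = \sum_(i < N) M ^+ 2.
  by rewrite sumr_const card_ord mulr_natl.
apply: ler_sum => i _; rewrite -expr2 -real_normK ?num_real //.
by rewrite ler_pXn2r ?nnegrE ?(le_trans _ (xM i)).
Qed.

Lemma dist_set_ge0 S x : S !=set0 -> 0 <= dist_set S x.
Proof.
move=> [z Sz]; apply: lb_le_inf; first by exists (enorm (z - x)), z.
by move=> _ [y _ <-]; exact: enorm_ge0.
Qed.

Lemma dist_set_le S x z : S z -> dist_set S x <= enorm (z - x).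
Proof.
move=> Sz; apply: ge_inf; last by exists z.
by exists 0 => _ [y _ <-]; exact: enorm_ge0.
Qed.

End Euclidean.

Section RealInequalities.
Variable R : realType.
Implicit Types a b c k p r s t : R.

Lemma powR_subadd a b r : 0 < r <= 1 -> 0 <= a -> 0 <= b ->
  powR (a + b) r <= powR a r + powR b r.
Proof.
move=> /andP[r0 r1] a0 b0.
have [ab0|abn0] := eqVneq (a + b) 0.
  by rewrite ab0 powR0 ?gt_eqF // addr_ge0 // powR_ge0.
have abp : 0 < a + b by rewrite lt_neqAle eq_sym abn0 addr_ge0.
have scale t : 0 <= t <= a + b -> t / (a + b) * powR (a + b) r <= powR t r.
  move=> /andP[t0 tab]; have [->|tn0] := eqVneq t 0; first by rewrite !mul0r powR_ge0.
  have tp : 0 < t by rewrite lt_neqAle eq_sym tn0.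
  rewrite -{2}(divfK (lt0r_neq0 abp) t) powRM ?divr_ge0 ?(ltW abp) //.
  rewrite ler_pM2r ?powR_gt0 // ger1_powR // divr_gt0 //=.
  by rewrite ler_pdivrMr // mul1r.
apply: le_trans (lerD (scale a _) (scale b _)); last 2 first.
- by rewrite a0 lerDl.
- by rewrite b0 lerDr.
by rewrite -mulrDl -mulrDl divff ?mul1r.
Qed.

Lemma ler_dist_powR a b r : 0 < r <= 1 -> 0 <= a -> 0 <= b ->
  `|powR a r - powR b r| <= powR `|a - b| r.
Proof.
move=> r01; wlog ba : a b / b <= a.
  move=> W a0 b0; have [ba|/ltW ab] := leP b a; first exact: W.
  by rewrite distrC (distrC a) W.
move=> a0 b0; have r0 : 0 <= r by case/andP: r01 => /ltW.
have le_ab : powR b r <= powR a r by apply: ge0_ler_powR.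
rewrite !ger0_norm ?subr_ge0 // lerBlDl.
by rewrite -{1}(subrKC b a) powR_subadd // subr_ge0.
Qed.

Lemma powR_tangent s t p : 1 < p -> 0 <= s -> 0 <= t ->
  powR s p + p * powR s (p - 1) * (t - s) <= powR t p.
Proof.
move=> p1 s0 t0; have p0 : 0 < p by apply: lt_trans p1.
have pm0 : 0 < p - 1 by rewrite subr_gt0.
have young := conjugate_powR t0 (powR_ge0 s (p - 1)) p0 (divr_gt0 p0 pm0).
rewrite -powRrM mulrCA divff ?gt_eqF // mulr1 invf_div in young.
have /young : p^-1 + (p - 1) / p = 1 by field; rewrite gt_eqF.
rewrite -(ler_pM2l p0) mulrDr => {}young.
have ss : s * powR s (p - 1) = powR s p by rewrite mulr_powRB1.
have -> : powR s p + p * powR s (p - 1) * (t - s)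
          = p * (t * powR s (p - 1)) - (p - 1) * powR s p by rewrite -ss; ring.
have E1 : p * (powR t p / p) = powR t p by field; rewrite gt_eqF.
have E2 : p * (powR s p * ((p - 1) / p)) = (p - 1) * powR s p.
  by field; rewrite gt_eqF.
lra.
Qed.

Lemma sqrtr_le_mean c t : 0 < c -> 0 <= t -> Num.sqrt t <= (t + c ^+ 2) / (2 * c).
Proof.
move=> c0 t0; rewrite ler_pdivlMr ?mulr_gt0 //.
have := sqr_ge0 (Num.sqrt t - c); rewrite sqrrB sqr_sqrtr //; lra.
Qed.

Lemma ler_dist_sqrt_sqrD a b k : 0 <= a -> 0 <= b -> 0 <= k ->
  `|Num.sqrt (a ^+ 2 + k) - Num.sqrt (b ^+ 2 + k)| <= `|a - b|.
Proof.
move=> a0 b0 k0.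
set A := Num.sqrt _; set B := Num.sqrt _.
have A0 : 0 <= A := sqrtr_ge0 _; have B0 : 0 <= B := sqrtr_ge0 _.
have A2 : A ^+ 2 = a ^+ 2 + k by rewrite sqr_sqrtr // addr_ge0 ?sqr_ge0.
have B2 : B ^+ 2 = b ^+ 2 + k by rewrite sqr_sqrtr // addr_ge0 ?sqr_ge0.
have AB : a * b + k <= A * B.
  rewrite -(ler_pXn2r (_ : (0 < 2)%N)) ?nnegrE ?addr_ge0 ?mulr_ge0 //.
  rewrite exprMn A2 B2; have := sqr_ge0 (a - b); rewrite !expr2; nra.
rewrite -(ler_pXn2r (_ : (0 < 2)%N)) ?nnegrE ?normr_ge0 //.
rewrite !real_normK ?num_real // !sqrrB A2 B2; lra.
Qed.

End RealInequalities.

Section Continuity.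
Variables (R : realType) (N : nat).
Notation vec := 'rV[R]_N.
Implicit Types (F G : vec -> R) (x y : vec).

Lemma econtinuous_continuous F : econtinuous F -> continuous F.
Proof.
move=> Fc x; apply/(@cvgrPdist_lt _ _ _ (nbhs x) (nbhs_filter x)) => e e0.
have [d d0 Fd] := Fc x e e0; apply/nbhs_ballP.
have N1 : 0 < N%:R + 1 :> R by rewrite ltr_wpDl.
set M := d / (N%:R + 1).
have M0 : 0 < M by rewrite divr_gt0.
exists M => // y [_ /= xy]; rewrite distrC; apply: Fd.
have yx : enorm (y - x) ^+ 2 <= N%:R * M ^+ 2.
  by apply: sqr_enorm_le_coord => i; have := xy ord0 i; rewrite !mxE distrC => /ltW.
have MN : M * (N%:R + 1) = d by rewrite divfK ?lt0r_neq0.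
clearbody M; subst d.
have : enorm (y - x) ^+ 2 < (M * (N%:R + 1)) ^+ 2.
  apply: (le_lt_trans yx); rewrite exprMn mulrC ltr_pM2l ?exprn_gt0 //.
  by have := ler0n R N; rewrite expr2; nra.
by rewrite ltr_pXn2r ?nnegrE ?enorm_ge0 ?ltW.
Qed.

Lemma exists_minimizer F x0 r : econtinuous F ->
  (forall y, r <= enorm (y - x0) -> F x0 <= F y) -> exists z, forall y, F z <= F y.
Proof.
move=> Fc Fr.
pose A := [set v : vec | forall i, `[x0 ord0 i - `|r|, x0 ord0 i + `|r|]%classic (v ord0 i)].
have Acompact : compact A.
  by apply: (@rV_compact _ _ (fun i => `[x0 ord0 i - `|r|, x0 ord0 i + `|r|]%classic)) => i;
    exact: segment_compact.
have Ax0 : A x0 by move=> i /=; rewrite in_itv /= -ler_distl subrr normr0.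
have [z /set_mem Az zmin] := compact_EVT_min (ex_intro _ x0 Ax0) Acompact
  (continuous_subspaceT (econtinuous_continuous Fc)).
exists z => y; have [Ay|nAy] := pselect (A y); first exact/zmin/mem_set.
apply: le_trans (zmin _ (mem_set Ax0)) (Fr _ _).
have /existsNP[i yi] := nAy.
have ri : `|r| < `|(y - x0) ord0 i|.
  by rewrite !mxE ltNge; apply/negP => yr; apply: yi; rewrite /= in_itv /= -ler_distl.
exact: le_trans (ler_norm r) (ltW (lt_le_trans ri (ler_coord_enorm _ _))).
Qed.

Lemma econtinuousD F G : econtinuous F -> econtinuous G ->
  econtinuous (fun y => F y + G y).
Proof.
move=> Fc Gc x e e0; have e2 : 0 < e / 2 by rewrite divr_gt0.
have [d1 d10 Fd] := Fc x _ e2; have [d2 d20 Gd] := Gc x _ e2.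
exists (Num.min d1 d2) => [|y]; first by rewrite lt_min d10 d20.
rewrite lt_min => /andP[/Fd yF /Gd yG].
rewrite opprD addrACA (splitr e); apply: le_lt_trans (ler_normD _ _) _.
exact: ltrD.
Qed.

Lemma econtinuous_lipschitz F M : 0 <= M ->
  (forall x y, `|F y - F x| <= M * enorm (y - x)) -> econtinuous F.
Proof.
move=> M0 FM x e e0; have M1 : 0 < M + 1 by rewrite ltr_wpDl.
exists (e / (M + 1)) => [|y]; first by rewrite divr_gt0.
rewrite ltr_pdivlMr // => yx; apply: le_lt_trans (FM x y) _.
have := enorm_ge0 (y - x); nra.
Qed.

Lemma econtinuousBr F c : econtinuous F -> econtinuous (fun y => F y - c).
Proof.
move=> Fc x e e0; have [d d0 Fd] := Fc x e e0; exists d => // y /Fd.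
by rewrite opprB addrA subrK.
Qed.

Lemma econtinuous_powR F r : 0 < r <= 1 -> econtinuous F ->
  (forall y, 0 <= F y) -> econtinuous (fun y => powR (F y) r).
Proof.
move=> r01 Fc F0 x e e0; have r0 : 0 < r by case/andP: r01.
have [d d0 Fd] := Fc x _ (powR_gt0 (r^-1) e0).
exists d => // y /Fd yx; apply: le_lt_trans (ler_dist_powR r01 (F0 y) (F0 x)) _.
rewrite -[ltRHS](powRr1 (ltW e0)) -(mulVf (lt0r_neq0 r0)) powRrM.
by apply: gt0_ltr_powR; rewrite ?nnegrE ?normr_ge0 ?powR_ge0.
Qed.

Lemma econtinuous_enorm_dist (a : vec) c : 0 <= c ->
  econtinuous (fun y => c * enorm (y - a)).
Proof.
move=> c0; apply: (econtinuous_lipschitz c0) => x y.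
rewrite -mulrBr normrM ger0_norm // ler_wpM2l //.
by apply: le_trans (ler_dist_enorm _ _) _; rewrite opprB addrA subrK.
Qed.

End Continuity.

Section SmoothDistance.
Variables (R : realType) (N : nat).
Notation vec := 'rV[R]_N.
Implicit Types (f : vec -> R) (w y z : vec) (c eta : R).

(* A smooth stand-in for [enorm (y - z)]: minimising [f + c * smooth_dist z eta]
   produces a Frechet subgradient of [f] even when the minimiser is [z]. *)
Definition smooth_dist z eta y : R := Num.sqrt (enorm (y - z) ^+ 2 + eta ^+ 2).

Lemma sqr_smooth_dist z eta y :
  smooth_dist z eta y ^+ 2 = enorm (y - z) ^+ 2 + eta ^+ 2.
Proof. by rewrite sqr_sqrtr // addr_ge0 ?sqr_ge0. Qed.

Lemma enorm_le_smooth_dist z eta y : enorm (y - z) <= smooth_dist z eta y.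
Proof.
rewrite -(ler_pXn2r (_ : (0 < 2)%N)) ?nnegrE ?enorm_ge0 ?sqrtr_ge0 //.
by rewrite sqr_smooth_dist lerDl sqr_ge0.
Qed.

Lemma smooth_dist_ge z eta y : 0 <= eta -> eta <= smooth_dist z eta y.
Proof.
move=> eta0; rewrite -(ler_pXn2r (_ : (0 < 2)%N)) ?nnegrE ?sqrtr_ge0 //.
by rewrite sqr_smooth_dist lerDr sqr_ge0.
Qed.

Lemma smooth_dist_id z eta : 0 <= eta -> smooth_dist z eta z = eta.
Proof. by move=> eta0; rewrite /smooth_dist subrr enorm0 expr0n add0r sqrtr_sqr ger0_norm. Qed.

Lemma econtinuous_smooth_dist z eta c : 0 <= c ->
  econtinuous (fun y => c * smooth_dist z eta y).
Proof.
move=> c0; apply: (econtinuous_lipschitz c0) => x y.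
rewrite -mulrBr normrM ger0_norm // ler_wpM2l //.
apply: le_trans (ler_dist_sqrt_sqrD _ _ _) _; rewrite ?enorm_ge0 ?sqr_ge0 //.
by apply: le_trans (ler_dist_enorm _ _) _; rewrite opprB addrA subrK.
Qed.

Lemma smooth_dist_le z w y eta : 0 < eta ->
  smooth_dist z eta y <= smooth_dist z eta w
    + dotv (w - z) (y - w) / smooth_dist z eta w + enorm (y - w) ^+ 2 / eta.
Proof.
move=> eta0; set A := smooth_dist z eta w.
set X := dotv (w - z) (y - w); set t := enorm (y - w).
have etaA : eta <= A := smooth_dist_ge _ _ (ltW eta0).
have A0 : 0 < A := lt_le_trans eta0 etaA.
apply: le_trans (sqrtr_le_mean A0 _) _; first by rewrite addr_ge0 ?sqr_ge0.
have -> : enorm (y - z) ^+ 2 + eta ^+ 2 + A ^+ 2 = 2 * A ^+ 2 + 2 * X + t ^+ 2.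
  have A2 : A ^+ 2 = enorm (w - z) ^+ 2 + eta ^+ 2 := sqr_smooth_dist _ _ _.
  have yz := sqr_enormD (w - z) (y - w).
  rewrite [w - z + _]addrC addrA subrK in yz.
  by rewrite A2 yz -/X -/t; ring.
have -> : (2 * A ^+ 2 + 2 * X + t ^+ 2) / (2 * A) = A + X / A + t ^+ 2 / (2 * A).
  by field; rewrite lt0r_neq0.
rewrite lerD2l ler_wpM2l ?sqr_ge0 // lef_pV2 ?posrE ?mulr_gt0 //.
lra.
Qed.

Lemma frechet_subdiff_smooth_dist_min f z w eta c : 0 < eta -> 0 < c ->
  (forall y, f w + c * smooth_dist z eta w <= f y + c * smooth_dist z eta y) ->
  frechet_subdiff f w ((c / smooth_dist z eta w) *: (z - w)).
Proof.
move=> eta0 c0 wmin e e0; set A := smooth_dist z eta w.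
have A0 : 0 < A := lt_le_trans eta0 (smooth_dist_ge _ _ (ltW eta0)).
exists (e * eta / c) => [|y /andP[t0 ty]]; first by rewrite divr_gt0 ?mulr_gt0.
have := smooth_dist_le z w y eta0; rewrite -/A.
set X := dotv (w - z) (y - w); set t := enorm (y - w) in t0 ty * => yA.
have dv : dotv ((c / A) *: (z - w)) (y - w) = - (c / A * X).
  by rewrite dotvZl -opprB dotvNl mulrN.
have ct : c / eta * t ^+ 2 <= e * t.
  rewrite expr2 mulrA ler_pM2r // mulrAC ler_pdivrMr //.
  by rewrite ltr_pdivlMr // mulrC in ty; exact: ltW.
have E : c * (A + X / A + t ^+ 2 / eta) = c * A + c / A * X + c / eta * t ^+ 2.
  by field; rewrite !lt0r_neq0.
have := ler_wpM2l (ltW c0) yA; rewrite E => cyA.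
rewrite ler_pdivlMr // dv; have := wmin y; rewrite -/A; lra.
Qed.

Lemma enorm_smooth_dist_grad z w eta c : 0 < eta -> 0 <= c ->
  enorm ((c / smooth_dist z eta w) *: (z - w)) <= c.
Proof.
move=> eta0 c0; have A0 := lt_le_trans eta0 (smooth_dist_ge z w (ltW eta0)).
rewrite enormZ enormBC ger0_norm ?divr_ge0 ?(ltW A0) // mulrAC ler_pdivrMr //.
by rewrite ler_wpM2l // enorm_le_smooth_dist.
Qed.

End SmoothDistance.

Section Slope.
Variables (R : realType) (N : nat).
Notation vec := 'rV[R]_N.
Implicit Types (f h : vec -> R) (S : set vec) (x y z : vec).

Definition slope_le f z (L : R) : Prop := forall y, f z - L * enorm (y - z) <= f y.

Lemma exists_frechet_subgradient f z (L L' gam : R) : econtinuous f ->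
  0 < L < L' -> 0 < gam -> slope_le f z L ->
  exists w v, [/\ frechet_subdiff f w v, enorm v <= L' & f z - gam < f w].
Proof.
move=> fc /andP[L0 LL'] gam0 zslope.
have L'0 : 0 < L' := lt_trans L0 LL'.
have dL0 : 0 < L' - L by rewrite subr_gt0.
(* This [eta] makes [Psi w <= Psi z] force [L * enorm (w - z) <= gam / 2]. *)
set eta := gam * (L' - L) / (2 * L * L').
have eta0 : 0 < eta by rewrite divr_gt0 ?mulr_gt0.
pose Psi y := f y + L' * smooth_dist z eta y.
have Psiz : Psi z = f z + L' * eta by rewrite /Psi smooth_dist_id // ltW.
have [w wmin] : exists w, forall y, Psi w <= Psi y.
  apply: (exists_minimizer (x0 := z) (r := L' * eta / (L' - L))).
    exact: econtinuousD fc (econtinuous_smooth_dist z eta (ltW L'0)).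
  move=> y; rewrite Psiz ler_pdivrMr // => yz.
  have := zslope y; have := ler_wpM2l (ltW L'0) (enorm_le_smooth_dist z eta y).
  rewrite /Psi; lra.
exists w, ((L' / smooth_dist z eta w) *: (z - w)); split.
- exact: frechet_subdiff_smooth_dist_min eta0 L'0 wmin.
- exact: enorm_smooth_dist_grad eta0 (ltW L'0).
have := wmin z; rewrite Psiz /Psi.
have := ler_wpM2l (ltW L'0) (enorm_le_smooth_dist z eta w).
have := zslope w; set r := enorm (w - z) => wz rA wmin_z.
have rL : (L' - L) * r <= L' * eta by lra.
have : L * ((L' - L) * r) <= L * (L' * eta) by rewrite ler_pM2l.
have -> : L * (L' * eta) = (L' - L) * (gam / 2).
  by rewrite /eta; field; rewrite !lt0r_neq0.
rewrite mulrCA ler_pM2l // => Lr.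
lra.
Qed.

Lemma lojasiewicz_slope f z (c C q L : R) : econtinuous f -> 0 < C -> 0 < q -> 0 < L ->
  (forall w v, frechet_subdiff f w v -> f w - c <= C * powR (enorm v) q) ->
  slope_le f z L -> f z - c <= C * powR L q.
Proof.
move=> fc C0 q0 L0 loj zslope; rewrite leNgt; apply/negP => CLz.
set M := (C * powR L q + (f z - c)) / 2.
have CM : C * powR L q < M by rewrite /M; lra.
have Mz : M < f z - c by rewrite /M; lra.
have MC : 0 < M / C.
  by rewrite divr_gt0 // (le_lt_trans _ CM) // mulr_ge0 ?powR_ge0 ?ltW.
set L' := powR (M / C) q^-1.
have L'q : C * powR L' q = M.
  by rewrite -powRrM mulVf ?lt0r_neq0 // powRr1 ?(ltW MC) // mulrC divfK ?lt0r_neq0.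
have LL' : L < L'.
  rewrite -[L](powRr1 (ltW L0)) -(mulfV (lt0r_neq0 q0)) powRrM.
  apply: gt0_ltr_powR; rewrite ?invr_gt0 ?nnegrE ?powR_ge0 ?(ltW MC) //.
  by rewrite ltr_pdivlMr // mulrC.
have gam0 : 0 < f z - c - M by rewrite subr_gt0.
have [w [v [wv vL' zw]]] :=
  exists_frechet_subgradient fc (introT andP (conj L0 LL')) gam0 zslope.
have : C * powR (enorm v) q <= C * powR L' q.
  by rewrite ler_pM2l // ge0_ler_powR ?nnegrE ?enorm_ge0 ?powR_ge0 ?(ltW q0).
have := loj w v wv; lra.
Qed.

Lemma slope_le_powR h z (lam p : R) : 1 < p -> 0 <= lam ->
  (forall y, 0 <= h y) -> slope_le h z lam ->
  slope_le (fun y => powR (h y) p) z (p * lam * powR (h z) (p - 1)).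
Proof.
move=> p1 lam0 h0 zslope y /=.
apply: le_trans (powR_tangent p1 (h0 z) (h0 y)); rewrite lerD2l.
have k0 : 0 <= p * powR (h z) (p - 1).
  by rewrite mulr_ge0 ?powR_ge0 // ltW // (lt_trans ltr01).
rewrite (_ : p * lam * _ * _ = p * powR (h z) (p - 1) * (lam * enorm (y - z))); last by ring.
by rewrite -mulrN ler_wpM2l //; have := zslope y; lra.
Qed.

Lemma exists_slope_le_point h S x (lam : R) : econtinuous h -> (forall y, 0 <= h y) ->
  (forall z, h z <= 0 -> S z) -> 0 < lam -> h x < lam * dist_set S x ->
  exists z, 0 < h z /\ slope_le h z lam.
Proof.
move=> hc h0 hS lam0 hx.
pose Phi y := h y + lam * enorm (y - x).
have Phix : Phi x = h x by rewrite /Phi subrr enorm0 mulr0 addr0.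
have [z zmin] : exists z, forall y, Phi z <= Phi y.
  apply: (exists_minimizer (x0 := x) (r := h x / lam)).
    exact: econtinuousD hc (econtinuous_enorm_dist x (ltW lam0)).
  move=> y; rewrite Phix ler_pdivrMr // /Phi => yx.
  by have := h0 y; lra.
exists z; split => [|y].
- rewrite ltNge; apply/negP => /hS/(dist_set_le x)/(ler_wpM2l (ltW lam0)) zx.
  by have := zmin x; have := h0 z; rewrite Phix /Phi; lra.
- have := ler_wpM2l (ltW lam0) (ler_enorm_split y z x).
  by have := zmin y; rewrite /Phi; lra.
Qed.

End Slope.

Section Subdifferentials.
Variables (R : realType) (N : nat).
Implicit Types (f : 'rV[R]_N -> R).

Lemma frechet_subdiff_limiting f x xs :
  frechet_subdiff f x xs -> limiting_subdiff f x xs.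
Proof.
move=> fx; exists (fun=> x), (fun=> xs); split => // e e0; exists 0%N => n _.
- by rewrite subrr enorm0.
- by rewrite subrr enorm0.
- by rewrite subrr normr0.
Qed.

Lemma inff_argmin f x0 : argmin f x0 -> inff f = f x0.
Proof.
move=> x0min; have lb : has_lbound [set f x | x in setT].
  by exists (f x0) => _ [y _ <-]; exact: x0min.
apply/eqP; rewrite eq_le ge_inf /=; last by exists x0.
  by apply: lb_le_inf => [|_ [y _ <-]]; [exists (f x0), x0 | exact: x0min].
exact: lb.
Qed.

End Subdifferentials.

Section LojasiewiczGrowth.
Variables (R : realType) (N : nat) (f : 'rV[R]_N -> R) (x0 : 'rV[R]_N) (p C : R).
Hypotheses (fc : econtinuous f) (x0min : argmin f x0) (p1 : 1 < p) (C0 : 0 < C).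
Hypothesis loj : forall w v,
  frechet_subdiff f w v -> f w - f x0 <= C * powR (enorm v) (p / (p - 1)).

Let root y := powR (f y - f x0) p^-1.

Let p0 : 0 < p. Proof. exact: lt_trans ltr01 p1. Qed.
Let pm0 : 0 < p - 1. Proof. by rewrite subr_gt0. Qed.

Let rootK y : powR (root y) p = f y - f x0.
Proof. by rewrite -powRrM mulVf ?lt0r_neq0 // powRr1 // subr_ge0. Qed.

Let root_continuous : econtinuous root.
Proof.
apply: econtinuous_powR (econtinuousBr _ fc) _ => [|y]; last by rewrite subr_ge0.
by rewrite invr_gt0 p0 invf_le1 ?(ltW p1).
Qed.

Let root_le0 z : root z <= 0 -> argmin f z.
Proof.
move=> rz0 y; have /powR_eq0_eq0 : root z = 0 by apply/le_anti; rewrite rz0 powR_ge0.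
by move=> /eqP; rewrite subr_eq0 => /eqP ->.
Qed.

Lemma lojasiewicz_root_slope z lam : 0 < lam -> 0 < root z ->
  slope_le root z lam -> 1 <= C * powR (p * lam) (p / (p - 1)).
Proof.
move=> lam0 rz zslope; set q := p / (p - 1); set L := p * lam * powR (root z) (p - 1).
have L0 : 0 < L by rewrite /L !mulr_gt0 // powR_gt0.
have fslope : slope_le f z L.
  move=> y; have := slope_le_powR p1 (ltW lam0) (fun y => powR_ge0 _ _) zslope y.
  by rewrite /= !rootK -/(root z) -/L; lra.
have := lojasiewicz_slope fc C0 (divr_gt0 p0 pm0) L0 loj fslope.
(* [(p - 1) * q = p] turns [C * L ^ q] into [C * (p * lam) ^ q * (f z - f x0)]. *)
rewrite /L powRM ?mulr_ge0 ?powR_ge0 ?(ltW p0) ?(ltW lam0) // -powRrM.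
rewrite [_ * q](_ : _ = p); last by rewrite /q mulrC divfK ?lt0r_neq0.
rewrite rootK mulrA -[X in X <= _]mul1r ler_pM2r //.
by rewrite -rootK powR_gt0.
Qed.

Lemma lojasiewicz_growth x m : 0 < m -> C * powR (p * m) (p / (p - 1)) <= 1 ->
  powR m p * powR (dist_set (argmin f) x) p <= f x - f x0.
Proof.
move=> m0 Cm; set d := dist_set _ x.
suff md : m * d <= root x.
  have d0 : 0 <= d := dist_set_ge0 x (ex_intro _ x0 x0min).
  rewrite -powRM ?(ltW m0) // -(rootK x).
  by apply: ge0_ler_powR; rewrite ?nnegrE ?(ltW p0) ?powR_ge0 ?mulr_ge0 ?(ltW m0).
rewrite leNgt; apply/negP => xmd.
have rx0 : 0 <= root x := powR_ge0 _ _.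
have d0 : 0 < d by rewrite -(pmulr_rgt0 _ m0); exact: le_lt_trans rx0 xmd.
set lam := (root x + m * d) / (2 * d).
have lam0 : 0 < lam by rewrite divr_gt0 ?mulr_gt0 // ltr_wpDl // mulr_gt0.
have lamm : lam < m by rewrite ltr_pdivrMr ?mulr_gt0 //; lra.
have xlam : root x < lam * d.
  rewrite /lam mulrAC ltr_pdivlMr ?mulr_gt0 // -subr_gt0.
  have -> : (root x + m * d) * d - root x * (2 * d) = d * (m * d - root x) by ring.
  by rewrite mulr_gt0 // subr_gt0.
have [z [rz zslope]] :=
  exists_slope_le_point root_continuous (fun y => powR_ge0 _ _) root_le0 lam0 xlam.
have := lojasiewicz_root_slope lam0 rz zslope.
have : C * powR (p * lam) (p / (p - 1)) < C * powR (p * m) (p / (p - 1)).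
  rewrite ltr_pM2l //; apply: gt0_ltr_powR; rewrite ?divr_gt0 ?nnegrE ?ltr_pM2l //.
    exact: mulr_ge0 (ltW p0) (ltW lam0).
  exact: mulr_ge0 (ltW p0) (ltW m0).
lra.
Qed.

End LojasiewiczGrowth.

Lemma lojasiewicz_constantsE (R : realType) (p mu : R) : 1 < p -> 0 < mu ->
  (p / (p - 1) * powR mu (p / (p - 1) / p))^-1 *
  powR (p * powR ((powR (p - 1) (p - 1))^-1 * (mu / p)) p^-1) (p / (p - 1)) = 1.
Proof.
move=> p1 mu0; have p0 : 0 < p := lt_trans ltr01 p1.
have pm0 : 0 < p - 1 by rewrite subr_gt0.
have powRE (u x : R) : 0 < u -> powR u x = expR (x * ln u).
  by move=> u0; rewrite /powR gt_eqF.
set a := ln p; set b := ln (p - 1); set c := ln mu.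
have Ea : expR a = p by rewrite lnK // posrE.
have Eb : expR b = p - 1 by rewrite lnK // posrE.
have Ec : expR c = mu by rewrite lnK // posrE.
have -> : (powR (p - 1) (p - 1))^-1 * (mu / p) = expR (- ((p - 1) * b) + (c - a)).
  by rewrite powRE // -/b -expRN !expRD !expRN Ea Ec.
rewrite -expRM -[X in X * expR _]Ea -expRD -expRM powRE // -/c.
have -> : p / (p - 1) = expR (a - b) by rewrite expRD expRN Ea Eb.
rewrite -expRD -expRN -expRD -[RHS](expR0 R); congr expR.
rewrite expRD expRN Ea Eb; field.
by rewrite !lt0r_neq0.
Qed.

Unset Implicit Arguments.

Theorem theorem3 (R : realType) (N : nat) (f : 'rV[R]_N -> R) (p mu : R) :
  econtinuous f -> argmin f !=set0 -> 1 < p -> 0 < mu ->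
  (let q := p / (p - 1) in
   forall x xs, limiting_subdiff f x xs ->
     f x - inff f <= (q * powR mu (q / p))^-1 * powR (enorm xs) q) ->
  forall x, (powR (p - 1) (p - 1))^-1 * (mu / p) * powR (dist_set (argmin f) x) p
              <= f x - inff f.
Proof.
move=> fc [x0 x0min] p1 mu0 loj x; rewrite (inff_argmin x0min) in loj *.
have p0 : 0 < p := lt_trans ltr01 p1.
set C := (p / (p - 1) * powR mu (p / (p - 1) / p))^-1.
have C0 : 0 < C by rewrite invr_gt0 mulr_gt0 ?divr_gt0 ?powR_gt0 // subr_gt0.
set K := (powR (p - 1) (p - 1))^-1 * (mu / p).
have K0 : 0 < K by rewrite mulr_gt0 ?invr_gt0 ?powR_gt0 ?divr_gt0 // subr_gt0.
have Cm : C * powR (p * powR K p^-1) (p / (p - 1)) <= 1.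
  by rewrite lojasiewicz_constantsE.
have := lojasiewicz_growth fc x0min p1 C0
  (fun w v wv => loj w v (frechet_subdiff_limiting wv)) x (powR_gt0 p^-1 K0) Cm.
by rewrite -powRrM mulVf ?lt0r_neq0 // powRr1 // ltW.
Qed.
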